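(* Fix $k\in\mathbb N$ and $s>0$. For every $\varepsilon>0$ there exists $\eta>0$ such that, for all sufficiently large $P$, all $R$ with $2\le R\le P^\eta$, all real $M\ge1$, all $Q$ with $1\le Q\le P^{k/2}$ and all integers $q$ with $1\le q\le Q$, one has \[ \int_{\mathfrak M_q(Q,P)}|f_q^\dagger(\alpha;P,M,R)|^s\,d\alpha\ll QM^sP^{\varepsilon-k}, \] with implied constant depending only on $\varepsilon,\eta,k,s$.
   Context: For real $P,R\ge1$, $\mathscr A(P,R)$ is the set of integers $n\in[1,P]$ all of whose prime divisors are at most $R$; $e(z)=e^{2\pi iz}$. For $q\in\mathbb N$, $u\mid q^\infty$ means every prime dividing $u$ divides $q$, and $\mathscr C_q(P,R)=\{n\in\mathscr A(P,R): n\mid q^\infty\}$. Define $f_q^\dagger(\alpha;P,M,R)=\sum_{v\in\mathscr A(M,R),\ (v,q)=1}\sum_{u\in\mathscr C_q(P/v,R)}e(\alpha(uv)^k)$. For $1\le q\le Q$, $\mathfrak M_q(Q,P)$ is the union over $0\le a\le q$ with $(a,q)=1$ of $\{\alpha\in[0,1):|q\alpha-a|\le QP^{-k}\}$. *)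

From HB Require Import structures.
From mathcomp Require Import all_boot all_order all_algebra.
From mathcomp Require Import all_classical all_reals all_analysis.
From mathcomp Require Import complex.
Set Implicit Arguments. Unset Strict Implicit. Unset Printing Implicit Defensive.
Import Order.TTheory GRing.Theory Num.Theory.
Local Open Scope ring_scope.

Section Defs.
Variable R : realType.

Definition ee (z : R) : R[i] :=
  Complex (cos (2 * pi * z)) (sin (2 * pi * z)).

Definition smooth (Rb : R) (n : nat) : bool :=
  all (fun p => (p%:R <= Rb)) (primes n).

Definition inA (P Rb : R) (n : nat) : bool :=
  [&& (0 < n)%N, (n%:R <= P) & smooth Rb n].

Definition divpinf (u q : nat) : bool := all (fun p => (p %| q)%N) (primes u).

Definition inC (q : nat) (P Rb : R) (n : nat) : bool := inA P Rb n && divpinf n q.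

(* The ranges 0 <= v <= trunc M and
   0 <= u <= trunc (P / v) contain all admissible v, u (which satisfy
   v <= M, u <= P/v); the filters select exactly A(M,Rb) and C_q(P/v,Rb). *)
Definition fdag (k q : nat) (alpha P M Rb : R) : R[i] :=
  \sum_(v < (Num.truncn M).+1 | inA M Rb v && coprime v q)
    \sum_(u < (Num.truncn (P / v%:R)).+1 | inC q (P / v%:R) Rb u)
      ee (alpha * ((u * v)%N%:R) ^+ k).

Definition majarc (k q : nat) (Q P : R) : set R :=
  [set alpha | 0 <= alpha < 1 /\
    exists a : nat, [/\ (a <= q)%N, coprime a q &
       `| q%:R * alpha - a%:R | <= Q * P ^- k]].

End Defs.

From HB Require Import structures.
From mathcomp Require Import all_boot all_order all_algebra.
From mathcomp Require Import all_classical all_reals all_analysis.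
From mathcomp Require Import complex.
From mathcomp Require Import ring lra.
Set Implicit Arguments. Unset Strict Implicit. Unset Printing Implicit Defensive.
Import Order.TTheory GRing.Theory Num.Theory.
Local Open Scope ring_scope.

(* Bound |f_q^dagger| trivially by M times the number of u <= P with u | q^oo.
   By Rankin's trick that number is at most P^d prod_(p | q) (1 - p^(-d))^(-1), and the
   Euler factors are at most p^d except for the boundedly many p with p^d < 2, so it is
   O_d(P^d q^d) = O(P^(eps/s)) for d small since q <= P^(k/2).  The major arc has measure
   at most 4 Q P^(-k). *)

Lemma divpinf_prod_primes (u q : nat) : (0 < q)%N -> (0 < u)%N -> divpinf u q ->
  (\prod_(p <- primes q) p ^ logn p u)%N = u.
Proof.
move=> q_gt0 u_gt0 /allP uq.
rewrite (bigID (mem (primes u))) /= [X in (_ * X)%N]big1 ?muln1; last first.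
  move=> p pu; suff -> : logn p u = 0%N by [].
  by apply/eqP; rewrite -leqn0 leqNgt logn_gt0.
rewrite -big_filter (perm_big (primes u)); last first.
  apply: uniq_perm; [exact/filter_uniq/primes_uniq | exact: primes_uniq |].
  move=> p; rewrite mem_filter andb_idr // => pu.
  by move: (pu); rewrite !mem_primes => /and3P[-> _ _]; rewrite q_gt0 uq.
by rewrite {3}(prod_prime_decomp u_gt0) prime_decompE big_map.
Qed.

Lemma divpinfnn (q : nat) : divpinf q q.
Proof. by apply/allP => p; rewrite mem_primes => /and3P[]. Qed.

Lemma prod_primes_le (q : nat) : (0 < q)%N -> (\prod_(p <- primes q) p <= q)%N.
Proof.
move=> q_gt0; rewrite -{2}(divpinf_prod_primes q_gt0 q_gt0 (divpinfnn q)).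
rewrite big_seq_cond [X in (_ <= X)%N]big_seq_cond; apply: leq_prod => p.
rewrite andbT => pq; rewrite -{1}(expn1 p) leq_pexp2l ?logn_gt0 //.
by move: pq; rewrite mem_primes => /andP[/prime_gt0].
Qed.

Lemma count_primes_lt (q B : nat) : (count (fun p => p < B) (primes q) <= B)%N.
Proof.
rewrite -size_filter -[X in (_ <= X)%N](size_iota 0 B).
apply: uniq_leq_size; first exact/filter_uniq/primes_uniq.
by move=> p; rewrite mem_filter mem_iota add0n => /andP[].
Qed.

Section RealArith.
Variable R : realType.

Lemma powR_prod (I : Type) (r : seq I) (F : I -> R) (a : R) :
  (forall i, 0 <= F i) -> (\prod_(i <- r) F i) `^ a = \prod_(i <- r) F i `^ a.
Proof.
move=> F_ge0; elim: r => [|x r IH]; first by rewrite !big_nil powR1.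
by rewrite !big_cons powRM ?IH //; apply: prodr_ge0.
Qed.

Lemma powR_exprn (x a : R) (n : nat) : 0 <= x -> (x ^+ n) `^ a = (x `^ a) ^+ n.
Proof.
move=> x_ge0; rewrite -powR_mulrn ?powR_ge0 // -powRrM mulrC powRrM.
by rewrite powR_mulrn // powR_ge0.
Qed.

Lemma powR_gt1 (x a : R) : 0 < a -> 1 < x -> 1 < x `^ a.
Proof.
move=> a_gt0 x_gt1; have := @gt0_ltr_powR R a a_gt0 1 x.
by rewrite powR1 => ->; rewrite // nnegrE ?ler01 // ltW // (lt_trans ltr01).
Qed.

Lemma geometric_sum_le (r : R) (N : nat) : 0 <= r < 1 ->
  \sum_(j < N) r ^+ j <= (1 - r)^-1.
Proof.
case/andP=> r_ge0 r_lt1; have r1_gt0 : 0 < 1 - r by rewrite subr_gt0.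
have -> : \sum_(j < N) r ^+ j = (1 - r ^+ N) / (1 - r).
  apply: (mulIf (lt0r_neq0 r1_gt0)); rewrite divfK ?lt0r_neq0 //.
  by rewrite -[1 - r ^+ N]opprB subrX1 -mulNr opprB mulrC.
by rewrite -[leRHS]mul1r ler_pM2r ?invr_gt0 // gerBl exprn_ge0.
Qed.

Lemma sum_ffun_prod_exprn_le (n m : nat) (r : 'I_n -> R) :
  (forall i, 0 <= r i < 1) ->
  \sum_(f : {ffun 'I_n -> 'I_m}) \prod_i r i ^+ f i <= \prod_i (1 - r i)^-1.
Proof.
move=> r01; rewrite -(bigA_distr_bigA (fun i (j : 'I_m) => r i ^+ j)).
apply: ler_prod => i _; rewrite sumr_ge0 ?geometric_sum_le //= => j _.
by case/andP: (r01 i) => /exprn_ge0.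
Qed.

Lemma powR_mul_le (x y P d e : R) : 0 <= d -> 0 < P ->
  0 <= x <= P -> 0 <= y <= P `^ e -> x `^ d * y `^ d <= P `^ (d * (1 + e)).
Proof.
move=> d_ge0 P_gt0 /andP[x_ge0 xP] /andP[y_ge0 yP].
rewrite mulrDr mulr1 powRD ?(gt_eqF P_gt0) ?implybT // [d * e]mulrC powRrM.
by rewrite ler_pM ?powR_ge0 ?ge0_ler_powR ?nnegrE ?powR_ge0 ?(ltW P_gt0).
Qed.

End RealArith.

Section CountDivisorsOfPowers.
Variable R : realType.

Lemma euler_factor_le (d : R) (B p : nat) : 0 < d -> 2 <= B%:R `^ d -> (2 <= p)%N ->
  (1 - p%:R `^ (- d))^-1
    <= (if (p < B)%N then (1 - 2 `^ (- d))^-1 else 1) * p%:R `^ d.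
Proof.
move=> d_gt0 B_ge p_ge2; set a := 2 `^ d; set t := p%:R `^ d.
have a_gt1 : 1 < a by rewrite powR_gt1 ?ltr1n.
have a_le_t : a <= t by rewrite ge0_ler_powR ?nnegrE ?ler_nat ?(ltW d_gt0).
have t_gt1 : 1 < t := lt_le_trans a_gt1 a_le_t.
have t_neq0 : t != 0 by rewrite gt_eqF // (lt_trans ltr01).
have a_neq0 : a != 0 by rewrite gt_eqF // (lt_trans ltr01).
have -> : (1 - p%:R `^ (- d))^-1 = t / (t - 1).
  by rewrite powRN -/t; field; rewrite t_neq0 gt_eqF ?subr_gt0.
case: ifP => [_|/negbT]; last rewrite -leqNgt => le_Bp.
  have -> : (1 - 2 `^ (- d))^-1 = a / (a - 1).
    by rewrite powRN -/a; field; rewrite a_neq0 gt_eqF ?subr_gt0.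
  rewrite ler_pdivrMr ?subr_gt0 // [leRHS]mulrAC -[leLHS]mul1r.
  rewrite ler_pM2r ?(lt_trans ltr01) // mulrAC ler_pdivlMr ?subr_gt0 //; nra.
have t_ge2 : 2 <= t.
  by apply: le_trans B_ge _; rewrite ge0_ler_powR ?nnegrE ?ler_nat ?(ltW d_gt0).
by rewrite mul1r ler_pdivrMr ?subr_gt0 //; nra.
Qed.

Lemma prod_euler_factors_le (d : R) (B q : nat) : 0 < d -> 2 <= B%:R `^ d ->
  (0 < q)%N ->
  \prod_(p <- primes q) (1 - p%:R `^ (- d))^-1
    <= (1 - 2 `^ (- d))^-1 ^+ B * q%:R `^ d.
Proof.
move=> d_gt0 B_ge q_gt0; set c := (1 - 2 `^ (- d))^-1.
have c_ge1 : 1 <= c.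
  rewrite /c invf_ge1 ?gerBl ?powR_ge0 // subr_gt0 powRN.
  by rewrite invf_lt1 ?powR_gt0 ?powR_gt1 ?ltr1n.
apply: (@le_trans _ _
    (\prod_(p <- primes q) ((if (p < B)%N then c else 1) * p%:R `^ d))).
  rewrite big_seq_cond [leRHS]big_seq_cond; apply: ler_prod => p.
  rewrite andbT mem_primes => /andP[/prime_gt1 p_gt1 _].
  rewrite euler_factor_le // andbT invr_ge0 subr_ge0 powRN.
  by rewrite invf_le1 ?powR_gt0 ?ltr0n ?(ltnW p_gt1) // ltW // powR_gt1 ?ltr1n.
rewrite big_split /= -big_mkcond /= big_const_seq iter_mulr_1.
apply: ler_pM; rewrite ?exprn_ge0 ?prodr_ge0 ?(le_trans ler01) //.
  by rewrite ler_weXn2l ?count_primes_lt.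
rewrite -powR_prod; last by move=> p; rewrite ler0n.
by rewrite -natr_prod ge0_ler_powR ?nnegrE ?ler_nat ?prod_primes_le ?(ltW d_gt0).
Qed.

Lemma card_divpinf_le (d : R) (q N : nat) : 0 < d -> (0 < q)%N ->
  #|[pred u : 'I_N.+1 | (0 < u)%N && divpinf u q]|%:R
    <= N%:R `^ d * \prod_(p <- primes q) (1 - p%:R `^ (- d))^-1.
Proof.
move=> d_gt0 q_gt0; set A := [pred u : 'I_N.+1 | _].
set n := size (primes q); pose p (i : 'I_n) := nth 0%N (primes q) i.
pose r (i : 'I_n) : R := (p i)%:R `^ (- d).
pose G (f : {ffun 'I_n -> 'I_N.+1}) : R := \prod_i r i ^+ f i.
pose e (u : 'I_N.+1) : {ffun 'I_n -> 'I_N.+1} := [ffun i => inord (logn (p i) u)].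
have prod_nth (F : nat -> nat) : (\prod_i F (p i) = \prod_(x <- primes q) F x)%N.
  by rewrite [RHS](big_nth 0%N) big_mkord.
have eE u i : A u -> e u i = logn (p i) u :> nat.
  case/andP=> u_gt0 _; rewrite ffunE inordK //.
  exact: ltn_trans (ltn_logl _ u_gt0) (ltn_ord u).
have e_inj : {in A &, injective e}.
  move=> u v Au Av euv; apply: val_inj; move: (Au) (Av) => /andP[u_gt0 uq] /andP[v_gt0 vq].
  rewrite /= -(divpinf_prod_primes q_gt0 u_gt0 uq) -(divpinf_prod_primes q_gt0 v_gt0 vq).
  rewrite -!prod_nth; apply: eq_bigr => i _.
  by rewrite -(eE u i Au) -(eE v i Av) euv.
(* Rankin's trick: each counted [u <= N] weighs [N^d u^(-d) >= 1], and [u^(-d)] is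
   the monomial [G] of its exponent vector [e u] over [primes q]. *)
have G_e u : A u -> 1 <= N%:R `^ d * G (e u).
  move=> Au; move: (Au) => /andP[u_gt0 uq].
  have -> : G (e u) = u%:R `^ (- d).
    rewrite -(divpinf_prod_primes q_gt0 u_gt0 uq) -prod_nth natr_prod.
    rewrite powR_prod => [|i]; last exact: ler0n.
    by apply: eq_bigr => i _; rewrite /r eE // natrX powR_exprn.
  rewrite powRN ler_pdivlMr ?powR_gt0 ?ltr0n // mul1r.
  by rewrite ge0_ler_powR ?nnegrE ?ler0n ?(ltW d_gt0) // ler_nat -ltnS.
have r01 i : 0 <= r i < 1.
  have p_gt1 : (1 < p i)%N.
    by apply/prime_gt1; move: (mem_nth 0%N (ltn_ord i)); rewrite mem_primes => /andP[].
  rewrite powR_ge0 /r powRN invf_lt1 ?powR_gt0 ?ltr0n ?(ltnW p_gt1) //.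
  by rewrite powR_gt1 ?ltr1n.
have -> : #|A|%:R = \sum_(u in A) (1 : R) by rewrite sumr_const.
apply: le_trans (ler_sum _ G_e) _; rewrite -mulr_sumr ler_wpM2l ?powR_ge0 //.
apply: (@le_trans _ _ (\sum_f G f)).
  rewrite -(big_imset G e_inj) /= [leRHS](bigID (mem (e @: A))) /= lerDl.
  apply: sumr_ge0 => f _; apply: prodr_ge0 => i _.
  by case/andP: (r01 i) => /exprn_ge0.
apply: le_trans (sum_ffun_prod_exprn_le _ r01) _.
by rewrite [leRHS](big_nth 0%N) big_mkord.
Qed.

Lemma card_divpinf_bound (d : R) : 0 < d -> exists2 C : R, 0 < C &
  forall q N : nat, (0 < q)%N ->
  #|[pred u : 'I_N.+1 | (0 < u)%N && divpinf u q]|%:R <= C * N%:R `^ d * q%:R `^ d.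
Proof.
move=> d_gt0; pose B := (Num.truncn (2 `^ d^-1 : R)).+1.
have B_ge : 2 <= B%:R `^ d.
  have {1}-> : 2 = (2 `^ d^-1) `^ d :> R by rewrite -powRrM mulVf ?gt_eqF ?powRr1.
  by rewrite ge0_ler_powR ?nnegrE ?powR_ge0 ?ler0n ?(ltW d_gt0) // ltW // truncnS_gt.
exists ((1 - 2 `^ (- d))^-1 ^+ B) => [|q N q_gt0].
  by rewrite exprn_gt0 // invr_gt0 subr_gt0 powRN invf_lt1 ?powR_gt0 ?powR_gt1 ?ltr1n.
apply: le_trans (card_divpinf_le N d_gt0 q_gt0) _.
by rewrite [leRHS]mulrAC [leRHS]mulrC ler_wpM2l ?powR_ge0 ?prod_euler_factors_le.
Qed.

End CountDivisorsOfPowers.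

Section IntegralBound.
Local Open Scope classical_set_scope.
Context d (T : measurableType d) (R : realType) (mu : {measure set T -> \bar R}).

Lemma ge0_le_integralT (f g : T -> \bar R) : (forall x, 0 <= f x)%E ->
  (forall x, f x <= g x)%E -> (\int[mu]_x f x <= \int[mu]_x g x)%E.
Proof.
move=> f_ge0 le_fg; have g_ge0 x : (0 <= g x)%E := le_trans (f_ge0 x) (le_fg x).
rewrite !ge0_integralTE //; apply: ereal_sup_le => _ [h /= hf <-].
by exists h => //= x; exact: le_trans (hf x) (le_fg x).
Qed.

Lemma integral_le_mul_measure (A U : set T) (F : T -> R) (K : R) :
  measurable U -> A `<=` U -> 0 <= K -> (forall x, A x -> 0 <= F x <= K) ->
  (\int[mu]_(x in A) (F x)%:E <= K%:E * mu U)%E.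
Proof.
move=> mU AU K_ge0 F_bd; rewrite integral_mkcond.
apply: (@le_trans _ _ (\int[mu]_x (K * \1_U x)%:E)%E).
  apply: ge0_le_integralT => x; rewrite patchE; case: ifP => [/set_mem Ax|_] //.
  - by case/andP: (F_bd x Ax).
  - rewrite indicE mem_set; last exact: AU.
    by rewrite mulr1 lee_fin; case/andP: (F_bd x Ax).
  - by rewrite (_ : point = 0%E) // lee_fin mulr_ge0.
have := integralZl_indic (m := mu) measurableT (fun=> U) K; rewrite /= => -> //.
  by rewrite integral_indic // setIT.
by move=> /lt_le_trans /(_ K_ge0); rewrite ltxx.
Qed.

End IntegralBound.

Section MajorArcs.
Local Open Scope classical_set_scope.
Variable R : realType.
Local Notation mu := (@lebesgue_measure R).

Definition arc_cover (q : nat) (w : R) : set R :=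
  \big[setU/set0]_(a < q.+1) `[(a%:R - w) / q%:R, (a%:R + w) / q%:R].

Lemma measurable_arc_cover (q : nat) (w : R) : measurable (arc_cover q w).
Proof. by apply: bigsetU_measurable => a _; exact: measurable_itv. Qed.

Lemma majarc_sub_arc_cover (k q : nat) (Q P : R) : (0 < q)%N ->
  majarc k q Q P `<=` arc_cover q (Q * P ^- k).
Proof.
move=> q_gt0 x [_ [a [aq _]]]; rewrite ler_norml => /andP[lb ub].
apply: (@bigsetU_sup _ a q.+1 (fun a : nat => `[(a%:R - _) / q%:R, (a%:R + _) / q%:R]));
  first by rewrite ltnS.
rewrite /= in_itv /= ler_pdivrMr ?ler_pdivlMr ?ltr0n //; apply/andP; split; lra.
Qed.

Lemma lebesgue_arc_cover_le (q : nat) (w : R) : (0 < q)%N -> 0 <= w ->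
  (mu (arc_cover q w) <= (4 * w)%:E)%E.
Proof.
move=> q_gt0 w_ge0; have q_ge1 : 1 <= q%:R :> R by rewrite ler1n.
have q_neq0 : q%:R != 0 :> R by rewrite pnatr_eq0 -lt0n.
pose I (a : nat) : set R := `[(a%:R - w) / q%:R, (a%:R + w) / q%:R].
have mu_I a : (mu (I a) <= (2 * w / q%:R)%:E)%E.
  rewrite /I lebesgue_measure_itv /=; case: ifP => _.
    by rewrite -EFinD lee_fin le_eqVlt; apply/predU1l; field.
  by rewrite lee_fin !mulr_ge0 ?invr_ge0.
apply: (le_trans (@content_subadditive _ _ _ mu (arc_cover q w) I q.+1
  (fun a _ => measurable_itv _) (measurable_arc_cover q w) (fun x h => h))).
apply: (@le_trans _ _ (\sum_(a < q.+1) (2 * w / q%:R)%:E)%E).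
  by apply: lee_sum => a _; exact: mu_I.
rewrite sumEFin lee_fin sumr_const card_ord -[_ *+ q.+1]mulr_natr -[q.+1%:R]natr1.
have -> : 2 * w / q%:R * (q%:R + 1) = 2 * w + 2 * (w / q%:R) by field.
suff : w / q%:R <= w by lra.
by rewrite ler_pdivrMr ?ltr0n // ler_peMr.
Qed.

Lemma integral_majarc_le (k q : nat) (Q P K : R) (F : R -> R) :
  (0 < q)%N -> 0 <= Q * P ^- k -> 0 <= K ->
  (forall x, majarc k q Q P x -> 0 <= F x <= K) ->
  (\int[mu]_(x in majarc k q Q P) (F x)%:E <= (K * (4 * (Q * P ^- k)))%:E)%E.
Proof.
move=> q_gt0 w_ge0 K_ge0 F_bd; rewrite EFinM.
apply: le_trans (integral_le_mul_measure mu (measurable_arc_cover q _)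
  (majarc_sub_arc_cover q_gt0) K_ge0 F_bd) _.
by rewrite lee_wpmul2l ?lee_fin ?lebesgue_arc_cover_le.
Qed.

End MajorArcs.

Section TrivialBound.
Variable R : realType.

Lemma normc_sum (I : Type) (r : seq I) (P : pred I) (F : I -> R[i]) :
  Normc.normc (\sum_(i <- r | P i) F i) <= \sum_(i <- r | P i) Normc.normc (F i).
Proof.
elim/big_rec2: _ => [|i y1 y2 _ IH]; first by rewrite Normc.normc0.
by apply: le_trans (le_normcD _ _) _; rewrite lerD2l.
Qed.

Lemma normc_ge0 (z : R[i]) : 0 <= Normc.normc z.
Proof. by case: z => a b; exact: sqrtr_ge0. Qed.

Lemma normc_ee (z : R) : Normc.normc (ee z) = 1.
Proof. by rewrite /Normc.normc /ee cos2Dsin2 sqrtr1. Qed.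

Lemma normc_sum_ee_le (I : finType) (S : pred I) (phi : I -> R) :
  Normc.normc (\sum_(i | S i) ee (phi i)) <= #|S|%:R.
Proof.
apply: le_trans (normc_sum _ _ _) _.
by under eq_bigr do rewrite normc_ee; rewrite sumr_const.
Qed.

Lemma normc_fdag_le (k q : nat) (alpha P M Rb X : R) :
  0 <= P -> 0 <= M -> 0 <= X ->
  (forall N : nat, N%:R <= P ->
     #|[pred u : 'I_N.+1 | (0 < u)%N && divpinf u q]|%:R <= X) ->
  Normc.normc (fdag k q alpha P M Rb) <= M * X.
Proof.
move=> P_ge0 M_ge0 X_ge0 card_le; apply: le_trans (normc_sum _ _ _) _.
apply: (@le_trans _ _ (\sum_(v < (Num.truncn M).+1 | (0 < v)%N) X)).
  rewrite big_mkcond [leRHS]big_mkcond; apply: ler_sum => v _.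
  case: ifP => [/andP[/and3P[v_gt0 _ _] _]|_]; last by case: ifP.
  rewrite v_gt0; apply: le_trans (normc_sum_ee_le _ _) _.
  set N := Num.truncn (P / v%:R).
  have N_le : N%:R <= P.
    have Pv_ge0 : 0 <= P / v%:R by rewrite divr_ge0.
    apply: le_trans (andP (truncn_itv Pv_ge0)).1 _.
    by rewrite ler_pdivrMr ?ltr0n // ler_peMr // ler1n.
  apply: le_trans (card_le N N_le); rewrite ler_nat.
  apply/subset_leq_card/fintype.subsetP => u.
  by rewrite !inE /inC /inA => /andP[/and3P[-> _ _] ->].
rewrite big_mkcond big_ord_recl /= add0r sumr_const card_ord -mulr_natl.
by rewrite ler_wpM2r // (andP (truncn_itv M_ge0)).1.
Qed.

End TrivialBound.

Theorem lemma3p2 (R : realType) (k : nat) (s : R) :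
  (1 <= k)%N -> 0 < s ->
  forall eps : R, 0 < eps ->
  exists eta : R, 0 < eta /\
  exists C : R, 0 < C /\
  exists P0 : R, forall P : R, P0 <= P ->
  forall Rb : R, 2 <= Rb -> Rb <= P `^ eta ->
  forall M : R, 1 <= M ->
  forall Q : R, 1 <= Q -> Q <= P `^ (k%:R / 2) ->
  forall q : nat, (1 <= q)%N -> q%:R <= Q ->
  (\int[@lebesgue_measure R]_(alpha in majarc k q Q P)
      ((Normc.normc (fdag k q alpha P M Rb)) `^ s)%:E
   <= (C * Q * M `^ s * P `^ (eps - k%:R))%:E)%E.
Proof.
move=> _ s_gt0 eps eps_gt0.
have k2_gt0 : 0 < 1 + k%:R / 2 :> R by rewrite ltr_pwDl ?divr_ge0.
pose d := eps / (s * (1 + k%:R / 2)).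
have d_gt0 : 0 < d by rewrite divr_gt0 ?mulr_gt0.
have [C C_gt0 card_le] := card_divpinf_bound d_gt0.
exists 1; split => //; exists (4 * C `^ s); split; first by rewrite mulr_gt0 // powR_gt0.
exists 1 => P P_ge1 Rb _ _ M M_ge1 Q Q_ge1 QP q q_gt0 qQ.
have P_gt0 : 0 < P := lt_le_trans ltr01 P_ge1.
have M_gt0 : 0 < M := lt_le_trans ltr01 M_ge1.
have w_ge0 : 0 <= Q * P ^- k.
  by rewrite mulr_ge0 ?invr_ge0 ?exprn_ge0 ?(ltW P_gt0) ?(le_trans ler01 Q_ge1).
set Y := M * (C * P `^ (eps / s)).
have Y_ge0 : 0 <= Y by rewrite !mulr_ge0 ?powR_ge0 ?ltW.
have fdag_le alpha : Normc.normc (fdag k q alpha P M Rb) <= Y.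
  apply: normc_fdag_le; rewrite ?mulr_ge0 ?powR_ge0 ?ltW // => N NP.
  apply: le_trans (card_le q N q_gt0) _; rewrite -mulrA ler_wpM2l ?(ltW C_gt0) //.
  have -> : eps / s = d * (1 + k%:R / 2) by rewrite /d; field; rewrite !gt_eqF.
  by rewrite powR_mul_le ?(ltW d_gt0) ?ler0n ?NP ?(le_trans qQ QP).
apply: le_trans (integral_majarc_le q_gt0 w_ge0 (powR_ge0 Y s) _) _.
  by move=> alpha _; rewrite powR_ge0 ge0_ler_powR ?nnegrE ?normc_ge0 ?Y_ge0 ?fdag_le ?ltW.
rewrite lee_fin le_eqVlt; apply/predU1l.
rewrite !powRM ?mulr_ge0 ?powR_ge0 ?ltW // -powRrM divfK ?gt_eqF //.
by rewrite powRB ?(gt_eqF P_gt0) ?implybT // powR_mulrn ?ltW //; ring.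
Qed.
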